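(* Let $\psi$ be a $\mathbf{\Sigma}$-piecewise linear function on $N_{\mathbb{R}}$. Then $\dim\Lambda_\psi<m$ if and only if there exist an index $k\in\{1,\dots,n\}$ and a constant $c\in\mathbb{R}$ such that $\langle\lambda,v_k\rangle=c$ for all $\lambda\in\Lambda_\psi$.
   Context: $N$ is a lattice of rank $m$, $M=\mathrm{Hom}(N,\mathbb{Z})$, $N_{\mathbb{R}}=N\otimes\mathbb{R}$, $M_{\mathbb{R}}=M\otimes\mathbb{R}$, with the natural pairing $\langle\cdot,\cdot\rangle$; $\Sigma$ is a complete simplicial fan in $N_{\mathbb{R}}$ with $n$ rays and $v_i\in N$ a nonzero lattice point on the $i$-th ray ($\mathbf{\Sigma}=(\Sigma,\{v_i\})$). A $\mathbf{\Sigma}$-piecewise linear function is a continuous $\psi:N_{\mathbb{R}}\to\mathbb{R}$ whose restriction to each cone of $\Sigma$ is linear; for each maximal cone $\sigma$, $\psi_\sigma\in M_{\mathbb{R}}$ is the linear function agreeing with $\psi$ on $\sigma$. $\Lambda_\psi\subset M_{\mathbb{R}}$ is the convex hull of $\{\psi_\sigma:\sigma\text{ a maximal cone of }\Sigma\}$. *)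

From HB Require Import structures.
From mathcomp Require Import all_boot all_order all_algebra.
Set Implicit Arguments. Unset Strict Implicit. Unset Printing Implicit Defensive.
Import Order.TTheory GRing.Theory Num.Theory.
Local Open Scope ring_scope.

(* N = Z^m (row vectors of ints), N_R = M_R = 'rV[R]_m, with R a real field.
   The pairing <u, x> between M_R and N_R is the standard dot product. *)

Definition pairing (R : realFieldType) (m : nat) (u x : 'rV[R]_m) : R :=
  \sum_(j < m) u 0 j * x 0 j.

Definition toNR (R : realFieldType) (m : nat) (v : 'rV[int]_m) : 'rV[R]_m :=
  map_mx (fun z : int => z%:~R) v.

Definition in_cone (R : realFieldType) (m n : nat) (v : 'I_n -> 'rV[R]_m)
  (S : {set 'I_n}) (x : 'rV[R]_m) : Prop :=
  exists a : 'I_n -> R,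
    (forall i, 0 <= a i) /\ (forall i, i \notin S -> a i = 0) /\
    x = \sum_(i < n) a i *: v i.

(* Sigma (a set of subsets of the n rays, each subset S standing for the cone
   generated by the v_i, i in S) is a complete simplicial fan whose rays are
   exactly the rays spanned by v_0, ..., v_(n-1). *)
Definition complete_simplicial_fan (R : realFieldType) (m n : nat)
  (v : 'I_n -> 'rV[R]_m) (Sigma : {set {set 'I_n}}) : Prop :=
  (forall i, [set i] \in Sigma) /\
  (forall S, S \in Sigma -> forall a : 'I_n -> R,
      (forall i, i \notin S -> a i = 0) ->
      \sum_(i < n) a i *: v i = 0 -> forall i, a i = 0) /\
  (forall S T : {set 'I_n}, S \in Sigma -> T \subset S -> T \in Sigma) /\
  (forall S T : {set 'I_n}, S \in Sigma -> T \in Sigma -> forall x,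
      in_cone v S x -> in_cone v T x -> in_cone v (S :&: T) x) /\
  (forall x, exists2 S, S \in Sigma & in_cone v S x).

Definition continuous_fun (R : realFieldType) (m : nat) (f : 'rV[R]_m -> R) :=
  forall (x : 'rV[R]_m) (e : R), 0 < e -> exists2 d : R, 0 < d &
    forall y : 'rV[R]_m, (forall j, `|y 0 j - x 0 j| < d) -> `|f y - f x| < e.

Definition agrees_on_cone (R : realFieldType) (m n : nat) (v : 'I_n -> 'rV[R]_m)
  (psi : 'rV[R]_m -> R) (S : {set 'I_n}) (u : 'rV[R]_m) : Prop :=
  forall x, in_cone v S x -> psi x = pairing u x.

Definition Sigma_PL (R : realFieldType) (m n : nat) (v : 'I_n -> 'rV[R]_m)
  (Sigma : {set {set 'I_n}}) (psi : 'rV[R]_m -> R) : Prop :=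
  continuous_fun psi /\
  forall S, S \in Sigma -> exists u, agrees_on_cone v psi S u.

Definition maximal_cone (n : nat) (Sigma : {set {set 'I_n}}) (S : {set 'I_n}) :=
  maxset [pred T : {set 'I_n} | T \in Sigma] S.

Definition Lambda (R : realFieldType) (m n : nat) (v : 'I_n -> 'rV[R]_m)
  (Sigma : {set {set 'I_n}}) (psi : 'rV[R]_m -> R) (l : 'rV[R]_m) : Prop :=
  exists (k : nat) (w : 'I_k -> R) (p : 'I_k -> 'rV[R]_m),
    (forall i, 0 <= w i) /\ \sum_(i < k) w i = 1 /\
    (forall i, exists2 S, maximal_cone Sigma S & agrees_on_cone v psi S (p i)) /\
    l = \sum_(i < k) w i *: p i.

Definition has_indep_diffs (R : realFieldType) (m : nat)
  (P : 'rV[R]_m -> Prop) (d : nat) : Prop :=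
  exists A : 'M[R]_(d, m), row_free A /\
    forall i, exists x y, P x /\ P y /\ row i A = x - y.

Definition affine_dim (R : realFieldType) (m : nat)
  (P : 'rV[R]_m -> Prop) (d : nat) : Prop :=
  has_indep_diffs P d /\ ~ has_indep_diffs P d.+1.

From HB Require Import structures.
From mathcomp Require Import all_boot all_order all_algebra.
From Stdlib Require Import Classical ClassicalEpsilon.
From mathcomp Require Import ring lra zify.
Set Implicit Arguments. Unset Strict Implicit. Unset Printing Implicit Defensive.
Import Order.TTheory GRing.Theory Num.Theory.
Local Open Scope ring_scope.

(* Write psi_S for a functional agreeing with psi on the
   cone S; Lambda_psi is the convex hull of the psi_S, S maximal.
   (<-) If <l, v_k> = c on Lambda_psi, every difference of points of
   Lambda_psi is orthogonal to v_k <> 0, so at most m - 1 of them are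
   linearly independent.
   (->) If dim Lambda_psi < m, some w <> 0 is orthogonal to all differences,
   i.e. <psi_S, w> = c0 for every maximal S.  Then psi has slope c0 along
   every line z + s w: the line crosses finitely many maximal cones, on each
   of which psi is a functional pairing to c0 with w.  Let v_k be a ray of
   every cone containing w.  For a maximal S choose z with z, z + v_k in S;
   far along w, the points z + s w and z + v_k + s w lie in one maximal cone
   M containing w, hence v_k, and comparing the increments of psi gives
   <psi_S, v_k> = psi (v_k).  So <l, v_k> = psi (v_k) on Lambda_psi. *)

Section Pairing.
Variables (R : realFieldType) (m : nat).

Lemma pairingE (u x : 'rV[R]_m) : pairing u x = (u *m x^T) 0 0.
Proof. by rewrite /pairing !mxE; apply: eq_bigr => j _; rewrite !mxE. Qed.

Lemma pairingDr (u x y : 'rV[R]_m) :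
  pairing u (x + y) = pairing u x + pairing u y.
Proof. by rewrite /pairing -big_split; apply: eq_bigr => j _; rewrite mxE mulrDr. Qed.

Lemma pairingZr (u x : 'rV[R]_m) (k : R) : pairing u (k *: x) = k * pairing u x.
Proof. by rewrite /pairing mulr_sumr; apply: eq_bigr => j _; rewrite mxE mulrCA. Qed.

Lemma pairingBl (u x y : 'rV[R]_m) : pairing (x - y) u = pairing x u - pairing y u.
Proof. by rewrite /pairing -sumrB; apply: eq_bigr => j _; rewrite !mxE mulrBl. Qed.

Lemma pairing_suml k (w : 'I_k -> R) (p : 'I_k -> 'rV[R]_m) (x : 'rV[R]_m) :
  pairing (\sum_(i < k) w i *: p i) x = \sum_(i < k) w i * pairing (p i) x.
Proof.
rewrite pairingE mulmx_suml summxE; apply: eq_bigr => i _.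
by rewrite -scalemxAl mxE pairingE.
Qed.

End Pairing.

Section Cones.
Variables (R : realFieldType) (m n : nat) (V : 'I_n -> 'rV[R]_m).

Definition supp (S : {set 'I_n}) (a : 'I_n -> R) := forall i, i \notin S -> a i = 0.
Definition comb (a : 'I_n -> R) := \sum_(i < n) a i *: V i.

Lemma comb_lin (x y : R) (a b : 'I_n -> R) :
  comb (fun i => x * a i + y * b i) = x *: comb a + y *: comb b.
Proof.
rewrite /comb !scaler_sumr -big_split /=; apply: eq_bigr => i _.
by rewrite scalerDl !scalerA.
Qed.

Lemma cone_add S x y : in_cone V S x -> in_cone V S y -> in_cone V S (x + y).
Proof.
move=> [a [a0 [aS ->]]] [b [b0 [bS ->]]].
exists (fun i => a i + b i); split; first by move=> i; rewrite addr_ge0.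
split; first by move=> i iS; rewrite aS // bS // addr0.
by rewrite -big_split; apply: eq_bigr => i _; rewrite scalerDl.
Qed.

Lemma cone_scale S (k : R) x : 0 <= k -> in_cone V S x -> in_cone V S (k *: x).
Proof.
move=> k0 [a [a0 [aS ->]]]; exists (fun i => k * a i); split.
  by move=> i; rewrite mulr_ge0.
split; first by move=> i iS; rewrite aS // mulr0.
by rewrite scaler_sumr; apply: eq_bigr => i _; rewrite scalerA.
Qed.

Lemma cone_gen (S : {set 'I_n}) i : i \in S -> in_cone V S (V i).
Proof.
move=> iS; exists (fun j => if j == i then 1 else 0); split.
  by move=> j; case: eqP.
split; first by move=> j jS; case: eqP => // ej; rewrite ej iS in jS.
rewrite (bigD1 i) //= eqxx scale1r big1 ?addr0 // => j /negbTE ->.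
by rewrite scale0r.
Qed.

Lemma cone_mono (S T : {set 'I_n}) x :
  S \subset T -> in_cone V S x -> in_cone V T x.
Proof.
move=> sST [a [a0 [aS ->]]]; exists a; split=> //; split=> // i iT.
by apply: aS; apply: contra iT; apply: (subsetP sST).
Qed.

Lemma cone_interval (S : {set 'I_n}) p q (a b c : R) : in_cone V S (p + a *: q) ->
  in_cone V S (p + b *: q) -> a <= c -> c <= b -> in_cone V S (p + c *: q).
Proof.
move=> Ha Hb ac cb.
have [eab|nab] := eqVneq a b.
  by have -> : c = a by apply/eqP; rewrite eq_le ac eab cb.
have lab : 0 < b - a by rewrite subr_gt0 lt_neqAle nab (le_trans ac cb).
set t := (c - a) / (b - a).
have t0 : 0 <= t by apply: divr_ge0; [rewrite subr_ge0 | apply: ltW].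
have t1 : 0 <= 1 - t by rewrite subr_ge0 /t ler_pdivrMr // mul1r lerD2r.
have -> : p + c *: q = (1 - t) *: (p + a *: q) + t *: (p + b *: q).
  rewrite !scalerDr !scalerA addrACA -scalerDl subrK scale1r -scalerDl.
  by congr (_ + _ *: _); rewrite /t; field; rewrite gt_eqF.
by apply: cone_add; apply: cone_scale.
Qed.

End Cones.

Section OrderedField.
Variable R : realFieldType.

Lemma ge0_of_small_perturbations (x y e0 : R) : 0 < e0 ->
  (forall e, 0 < e -> e <= e0 -> 0 <= x + e * y) -> 0 <= x.
Proof.
move=> e0p H; rewrite leNgt; apply/negP => x0.
have h0 := H e0 e0p (lexx _).
have y0 : 0 < y.
  rewrite ltNge; apply/negP => y0.
  have : e0 * y <= 0 by rewrite pmulr_rle0.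
  lra.
have hd : 0 < - x / (2 * y) by rewrite divr_gt0 ?mulr_gt0 ?oppr_gt0.
have hle : - x / (2 * y) <= e0 by rewrite ler_pdivrMr ?mulr_gt0 //; nra.
have := H _ hd hle.
have -> : x + - x / (2 * y) * y = x / 2 by field; rewrite gt_eqF.
lra.
Qed.

Lemma convex_near0_dichotomy (K : R -> Prop) :
  (forall a b c, K a -> K b -> a <= c -> c <= b -> K c) ->
  (exists2 e0, 0 < e0 & forall e, 0 < e -> e <= e0 -> K e) \/
  (exists2 e0, 0 < e0 & forall e, 0 < e -> e < e0 -> ~ K e).
Proof.
move=> Kconv.
have [[e' e'p Ke']|nK] := classic (exists2 e', 0 < e' & K e'); last first.
  by right; exists 1 => // e ep _ Ke; apply: nK; exists e.
have [bad|nbad] := classic (exists2 e0, 0 < e0 &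
  forall e, 0 < e -> e < e0 -> ~ K e); first by right.
left; exists e' => // e ep ee'.
apply: NNPP => nKe; apply: nbad; exists e => // e'' e''p e''e Ke''.
by apply: nKe; apply: (Kconv e'' e') => //; apply: ltW.
Qed.

Lemma common_threshold (I : eqType) (s : seq I) (K : I -> R -> Prop) :
  (forall T, T \in s -> exists2 e, 0 < e & forall e', 0 < e' -> e' < e -> ~ K T e') ->
  exists2 e, 0 < e & forall T, T \in s -> forall e', 0 < e' -> e' < e -> ~ K T e'.
Proof.
elim: s => [|T s IH] H; first by exists 1.
have [e1 e1p H1] : exists2 e, 0 < e & forall T', T' \in s ->
    forall e', 0 < e' -> e' < e -> ~ K T' e'.
  by apply: IH => T' h; apply: H; rewrite inE h orbT.
have [eT eTp HT] := H T (mem_head _ _).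
exists (Num.min e1 eT); first by rewrite lt_min e1p eTp.
move=> T'; rewrite inE => /orP [/eqP -> | T's] e' e'p; rewrite lt_min => /andP [h1 h2].
  exact: HT.
exact: H1.
Qed.

End OrderedField.

Lemma count_lt_sub (T : eqType) (P Q : pred T) (s : seq T) x :
  subpred P Q -> x \in s -> Q x -> ~~ P x -> (count P s < count Q s)%N.
Proof.
move=> sPQ; elim: s => [//|y s IH]; rewrite inE => /orP [/eqP <-|xs] Qx nPx /=.
  by have := sub_count sPQ s; rewrite (negbTE nPx) Qx /=; lia.
have := IH xs Qx nPx.
have : (P y <= Q y)%N by case: (P y) (sPQ y) => // /(_ isT) ->.
lia.
Qed.

Lemma eq_across_breakpoints (R : realDomainType) (T : Type) (B : seq R) (Phi : R -> T) :
  (forall a b, a < b -> ~~ has (fun t => a < t < b) B -> Phi a = Phi b) ->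
  forall a b, a <= b -> Phi a = Phi b.
Proof.
move=> base.
suff bounded N a b : (count (fun t => (a < t < b)%R) B <= N)%N -> a <= b -> Phi a = Phi b.
  by move=> a b; apply: bounded (leqnn _).
elim: N a b => [|N IH] a b hc ab; have [->//|nab] := eqVneq a b;
  have ltab : a < b by rewrite lt_neqAle nab.
  by apply: base => //; rewrite has_count -leqNgt.
have [/hasP [t tB /andP [hat tb]]|nh] := boolP (has (fun t => a < t < b) B);
  last exact: base.
have [c1 c2] :
    (count (fun x => (a < x < t)%R) B < count (fun x => (a < x < b)%R) B)%N /\
    (count (fun x => (t < x < b)%R) B < count (fun x => (a < x < b)%R) B)%N.
  split; apply: (count_lt_sub (x := t)); rewrite ?hat ?tb ?ltxx ?andbF //.
    by move=> x /andP [-> h2]; rewrite (lt_trans h2 tb).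
  by move=> x /andP [h1 ->]; rewrite (lt_trans hat h1).
rewrite (IH a t) ?(ltW hat) //; last by rewrite -ltnS (leq_trans c1).
by apply: IH; [rewrite -ltnS (leq_trans c2) | exact: ltW].
Qed.

Section Fan.
Variables (R : realFieldType) (m n : nat) (V : 'I_n -> 'rV[R]_m)
  (Sigma : {set {set 'I_n}}).
Hypothesis hF : complete_simplicial_fan V Sigma.

Lemma coef_unique (S : {set 'I_n}) : S \in Sigma -> forall a b,
  supp S a -> supp S b -> comb V a = comb V b -> forall i, a i = b i.
Proof.
move=> SS a b aS bS eab i; apply/eqP; rewrite -subr_eq0; apply/eqP.
case: hF => _ [hs _]; apply: (hs S SS (fun i => a i - b i)).
  by move=> j jS; rewrite aS // bS // subr0.
have -> : \sum_(j < n) (a j - b j) *: V j = comb V a - comb V b.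
  by rewrite /comb -sumrB; apply: eq_bigr => j _; rewrite scalerBl.
by rewrite eab subrr.
Qed.

(* A ray with a nonzero coefficient in a point of S lies in every cone of
   the fan containing that point (cones meet along faces). *)
Lemma support_in (S T : {set 'I_n}) a x k : S \in Sigma -> T \in Sigma ->
  (forall i, 0 <= a i) -> supp S a -> x = comb V a -> in_cone V T x -> a k != 0 ->
  k \in T.
Proof.
move=> SS TS a0 aS Ex xT ak.
case: (hF) => _ [_ [_ [hi _]]].
have [c [c0 [cST Ec]]] := hi S T SS TS x (ex_intro _ a (conj a0 (conj aS Ex))) xT.
have cS : supp S c by move=> j jS; apply: cST; rewrite inE negb_and jS.
have ck := coef_unique SS cS aS (etrans (esym Ec) Ex) k.
apply: contraT => kT; have := cST k; rewrite inE (negbTE kT) andbF => /(_ isT).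
by rewrite ck => /eqP; rewrite (negbTE ak).
Qed.

Lemma closed_cone (S : {set 'I_n}) p q e0 : S \in Sigma -> 0 < e0 ->
  (forall e, 0 < e -> e <= e0 -> in_cone V S (p + e *: q)) ->
  in_cone V S p /\ exists d, supp S d /\ q = comb V d.
Proof.
move=> SS e0p H.
have e02 : 0 < e0 / 2 by rewrite divr_gt0.
have [a [a0 [aS Ea]]] := H e0 e0p (lexx _).
have [b [b0 [bS Eb]]] := H (e0 / 2) e02 (ltac:(lra) : e0 / 2 <= e0).
pose d i := 2 / e0 * a i + - (2 / e0) * b i.
pose f i := -1 * a i + 2 * b i.
have dS : supp S d by move=> i iS; rewrite /d aS // bS // !mulr0 addr0.
have fS : supp S f by move=> i iS; rewrite /f aS // bS // !mulr0 addr0.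
have e0n : e0 != 0 by rewrite gt_eqF.
have Ed : comb V d = q.
  rewrite comb_lin /comb -Ea -Eb !scalerDr !scalerA addrACA -!scalerDl.
  have -> : 2 / e0 + - (2 / e0) = 0 by rewrite addrN.
  have -> : 2 / e0 * e0 + - (2 / e0) * (e0 / 2) = 1 by field.
  by rewrite scale0r add0r scale1r.
have Ef : comb V f = p.
  rewrite comb_lin /comb -Ea -Eb !scalerDr !scalerA addrACA -!scalerDl.
  have -> : -1 + 2 = 1 :> R by lra.
  have -> : -1 * e0 + 2 * (e0 / 2) = 0 by field.
  by rewrite scale1r scale0r addr0.
split; last by exists d.
exists f; split; last by split; last by rewrite -[LHS]Ef.
move=> i.
apply: (ge0_of_small_perturbations (y := d i) e0p) => e ep ee.
have [c [c0 [cS Ec]]] := H e ep ee.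
have fdS : supp S (fun j => 1 * f j + e * d j).
  by move=> j jS; rewrite fS // dS // !mulr0 addr0.
have Efd : comb V c = comb V (fun j => 1 * f j + e * d j).
  by rewrite comb_lin Ed Ef scale1r Ec.
by have := coef_unique SS cS fdS Efd i; rewrite mul1r => <-.
Qed.

Lemma local_cone p q : exists2 T, T \in Sigma & exists2 e0, 0 < e0 &
  forall e, 0 < e -> e <= e0 -> in_cone V T (p + e *: q).
Proof.
pose K T e := in_cone V T (p + e *: q).
apply: NNPP => nT.
have bad : forall T, T \in enum Sigma ->
    exists2 e, 0 < e & forall e', 0 < e' -> e' < e -> ~ K T e'.
  move=> T; rewrite mem_enum => TS.
  have [good|//] := @convex_near0_dichotomy R (K T) (@cone_interval _ _ _ V T p q).
  by case: nT; exists T.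
have [e ep He] := common_threshold bad.
case: hF => _ [_ [_ [_ hc]]].
have [S SS KS] := hc (p + (e / 2) *: q).
apply: (He S _ (e / 2)) => //; first by rewrite mem_enum.
  by rewrite divr_gt0.
lra.
Qed.

Lemma maximal_in S : maximal_cone Sigma S -> S \in Sigma.
Proof. by case/maxsetP. Qed.

Lemma maximal_above T : T \in Sigma ->
  exists2 M, maximal_cone Sigma M & T \subset M.
Proof.
move=> TS.
by have [M hM TM] := maxset_exists (P := [pred T : {set 'I_n} | T \in Sigma]) TS;
  exists M.
Qed.

Lemma in_maximal x : exists2 S, maximal_cone Sigma S & in_cone V S x.
Proof.
case: (hF) => _ [_ [_ [_ hc]]].
have [T TS xT] := hc x.
have [S hS TS'] := maximal_above TS.
by exists S => //; apply: cone_mono TS' xT.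
Qed.

(* Leaving the barycenter of S in any direction y stays in a cone T that
   contains the barycenter, hence all of S, hence equals S. *)
Lemma maximal_span S : maximal_cone Sigma S ->
  forall y, exists b, supp S b /\ y = comb V b.
Proof.
move=> hS y; have SS := maximal_in hS.
pose ind i : R := if i \in S then 1 else 0.
have ind0 i : 0 <= ind i by rewrite /ind; case: ifP.
have indS : supp S ind by move=> j /negbTE jS; rewrite /ind jS.
have [T TS [e0 e0p HT]] := local_cone (comb V ind) y.
have [xT [d [dT Ed]]] := closed_cone TS e0p HT.
have sub : S \subset T.
  apply/subsetP => i iS.
  by apply: (support_in SS TS ind0 indS erefl xT); rewrite /ind iS oner_eq0.
have [_ hmax] := maxsetP hS.
by exists d; rewrite -(hmax T TS sub).
Qed.

Definition coord (S : {set 'I_n}) (y : 'rV[R]_m) : 'I_n -> R :=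
  epsilon (inhabits (fun _ => 0)) (fun b => supp S b /\ y = comb V b).

Lemma coordP S y : maximal_cone Sigma S ->
  supp S (coord S y) /\ y = comb V (coord S y).
Proof.
move=> hS; exact: (epsilon_spec (inhabits (fun _ => 0))
  (fun b => supp S b /\ y = comb V b) (maximal_span hS y)).
Qed.

Lemma coord_lin S z w s i : maximal_cone Sigma S ->
  coord S (z + s *: w) i = coord S z i + s * coord S w i.
Proof.
move=> hS.
have [h1 e1] := coordP (z + s *: w) hS.
have [h2 e2] := coordP z hS.
have [h3 e3] := coordP w hS.
have h4 : supp S (fun j => 1 * coord S z j + s * coord S w j).
  by move=> j jS; rewrite h2 // h3 // !mulr0 addr0.
have := coef_unique (maximal_in hS) h1 h4 _ i; rewrite mul1r; apply.
by rewrite comb_lin -e1 -e2 -e3 scale1r.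
Qed.

Lemma coord_cone S y i : maximal_cone Sigma S -> in_cone V S y -> 0 <= coord S y i.
Proof.
move=> hS [c [c0 [cS Ec]]].
have [h1 e1] := coordP y hS.
by rewrite -(coef_unique (maximal_in hS) cS h1 _ i) // -e1.
Qed.

Lemma cone_of_coord S y : maximal_cone Sigma S ->
  (forall i, i \in S -> 0 <= coord S y i) -> in_cone V S y.
Proof.
move=> hS H; have [h1 e1] := coordP y hS.
exists (coord S y); split; last by split.
by move=> i; case: (boolP (i \in S)) => [/H //|/h1 ->].
Qed.

Lemma cone_absorbs S y : maximal_cone Sigma S ->
  exists z, in_cone V S z /\ in_cone V S (z + y).
Proof.
move=> hS; have [bS Eb] := coordP y hS; set b := coord S y in bS Eb.
pose c i : R := if i \in S then 1 + `|b i| else 0.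
have cS : supp S c by move=> i /negbTE iS; rewrite /c iS.
exists (comb V c); split.
  exists c; split=> // i; rewrite /c; case: ifP => // _.
  by rewrite addr_ge0 ?normr_ge0.
exists (fun i => 1 * c i + 1 * b i); split; last first.
  by split; [move=> i iS; rewrite cS ?bS // !mulr0 addr0 | rewrite -[RHS]/(comb V _) comb_lin !scale1r -Eb].
move=> i; rewrite /c !mul1r; case: ifP => iS; last by rewrite bS ?iS // addr0.
have := lerNnormlW (lexx `|b i|); lra.
Qed.

(* Far enough along direction w, the line z + s w enters a maximal cone
   that contains w itself (s = 1/e where w + e z stays in one cone). *)
Lemma far_along w z : exists2 M, maximal_cone Sigma M & in_cone V M w /\
  exists s, in_cone V M (z + s *: w).
Proof.
have [T TS [e1 e1p HT]] := local_cone w z.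
have [wT _] := closed_cone TS e1p HT.
have [M hM TM] := maximal_above TS.
exists M => //; split; first exact: cone_mono TM wT.
exists e1^-1.
have -> : z + e1^-1 *: w = e1^-1 *: (w + e1 *: z).
  by rewrite scalerDr scalerA mulVf ?gt_eqF // scale1r addrC.
by apply: cone_scale; [rewrite invr_ge0 ltW | apply: cone_mono TM (HT e1 e1p _)].
Qed.

Lemma ray_of_direction w : w != 0 ->
  exists k, forall T, T \in Sigma -> in_cone V T w -> k \in T.
Proof.
move=> w0; case: (hF) => _ [_ [_ [_ hc]]].
have [tau tauS [a [a0 [aS Ea]]]] := hc w.
have [k ak] : exists k, a k != 0.
  apply: NNPP => h; move/eqP: w0; apply; rewrite Ea big1 // => i _.
  have -> : a i = 0 by apply/eqP; apply: contraT => hi; case: h; exists i.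
  by rewrite scale0r.
by exists k => T TS wT; apply: (support_in tauS TS a0 aS Ea wT ak).
Qed.

(* The values of t where the line z + t w crosses a facet of a maximal cone:
   there some coordinate coord X (z + t w) i = coord X z i + t coord X w i
   changes sign. *)
Definition breakpoints (z w : 'rV[R]_m) : seq R :=
  [seq - coord X z i / coord X w i |
     X <- enum [set X : {set 'I_n} | maximal_cone Sigma X], i <- enum 'I_n].

Lemma segment_in_cone z w a b : a < b ->
  ~~ has (fun t => a < t < b) (breakpoints z w) ->
  exists2 M, maximal_cone Sigma M &
    forall t, a <= t -> t <= b -> in_cone V M (z + t *: w).
Proof.
move=> ab nh; pose mid := (a + b) / 2.
have [am mb] := midf_lt ab; rewrite -/mid in am mb.
have [M hM Mmid] := in_maximal (z + mid *: w).
exists M => // t hat tb; apply: cone_of_coord => // i iM.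
rewrite coord_lin //.
have := coord_cone i hM Mmid; rewrite coord_lin //.
set P := coord M z i; set Q := coord M w i => hm.
rewrite leNgt; apply/negP => neg.
have Qn : Q != 0 by apply/eqP => Q0; move: neg hm; rewrite Q0 mulr0 addr0; lra.
pose r := - P / Q.
have rQ : r * Q = - P by rewrite /r mulfVK.
have rB : r \in breakpoints z w.
  apply: (allpairs_f (fun X i => - coord X z i / coord X w i));
  by rewrite mem_enum // inE.
have h1 : (t - r) * Q < 0 by rewrite mulrBl rQ; lra.
have h2 : 0 <= (mid - r) * Q by rewrite mulrBl rQ; lra.
apply: (negP nh); apply/hasP; exists r => //.
have [Qp|Qneg] := ltP 0 Q.
  have [h3 h4] : t < r /\ r <= mid by split; nra.
  by apply/andP; split; lra.
have Qneg' : Q < 0 by rewrite lt_neqAle Qn Qneg.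
have [h3 h4] : r < t /\ mid <= r by split; nra.
by apply/andP; split; lra.
Qed.

Variable psi : 'rV[R]_m -> R.
Hypothesis hPL : forall S, S \in Sigma -> exists u, agrees_on_cone V psi S u.

Lemma psi_along z w c0 :
  (forall S u, maximal_cone Sigma S -> agrees_on_cone V psi S u -> pairing u w = c0) ->
  forall s, psi (z + s *: w) = psi z + s * c0.
Proof.
move=> Hw.
pose Phi a := psi (z + a *: w) - a * c0.
have Phi_eq a b : a <= b -> Phi a = Phi b.
  apply: (eq_across_breakpoints (B := breakpoints z w)) => {}a {}b ab nh.
  have [M hM HM] := segment_in_cone ab nh.
  have [u hu] := hPL (maximal_in hM).
  have Ht t : a <= t -> t <= b -> Phi t = pairing u z.
    move=> hat tb; rewrite /Phi (hu _ (HM t hat tb)) pairingDr pairingZr.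
    by rewrite (Hw M u hM hu) addrK.
  by rewrite !Ht ?lexx ?(ltW ab).
have Phi0 : Phi 0 = psi z by rewrite /Phi scale0r addr0 mul0r subr0.
move=> s; apply/eqP; rewrite -subr_eq -/(Phi s) -Phi0.
by case: (leP 0 s) => [/Phi_eq | /ltW/Phi_eq] ->.
Qed.

Lemma ray_with_fixed_values w c0 : w != 0 ->
  (forall S u, maximal_cone Sigma S -> agrees_on_cone V psi S u -> pairing u w = c0) ->
  exists k, forall S u, maximal_cone Sigma S -> agrees_on_cone V psi S u ->
    pairing u (V k) = psi (V k).
Proof.
move=> w0 Hw; have [k hk] := ray_of_direction w0.
exists k => S u hS hu.
have [z [zS zkS]] := cone_absorbs (V k) hS.
have [M hM [wM [s zM]]] := far_along w z.
have kM := hk M (maximal_in hM) wM.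
have zkM : in_cone V M (z + V k + s *: w).
  by rewrite addrAC; apply: cone_add => //; apply: cone_gen.
have [u' hu'] := hPL (maximal_in hM).
have incr_S : psi (z + V k) = psi z + pairing u (V k).
  by rewrite (hu _ zkS) pairingDr -(hu _ zS).
have incr_M : psi (z + V k + s *: w) = psi (z + s *: w) + psi (V k).
  by rewrite (hu' _ zkM) addrAC pairingDr -(hu' _ zM) -(hu' _ (cone_gen V kM)).
have := psi_along (z + V k) Hw s.
rewrite incr_M incr_S (psi_along z Hw s).
lra.
Qed.

End Fan.

Lemma ray_neq0 (R : realFieldType) (m n : nat) (V : 'I_n -> 'rV[R]_m)
  (Sigma : {set {set 'I_n}}) (k : 'I_n) :
  complete_simplicial_fan V Sigma -> V k != 0.
Proof.
case=> hr [hs _]; apply/eqP => vk.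
have := hs [set k] (hr k) (fun i => if i == k then 1 else 0).
have h1 i : i \notin [set k] -> (if i == k then 1 else 0) = 0 :> R.
  by rewrite inE; case: eqP.
have h2 : \sum_(i < n) (if i == k then 1 else 0) *: V i = 0.
  rewrite (bigD1 k) //= eqxx scale1r vk add0r big1 // => j /negbTE ->.
  by rewrite scale0r.
by move=> /(_ h1 h2 k); rewrite eqxx => /eqP; rewrite oner_eq0.
Qed.

Section AffineDimension.
Variables (R : realFieldType) (m : nat).

Lemma indep_diffs0 (P : 'rV[R]_m -> Prop) : has_indep_diffs P 0.
Proof. by exists 0; split; [rewrite /row_free mxrank0 | case]. Qed.

Lemma last_nat (P : nat -> Prop) B : P 0%N -> (forall d, P d -> (d < B)%N) ->
  exists2 d, P d & ~ P d.+1.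
Proof.
move=> P0 hB; apply: NNPP => h.
have step d : P d -> P d.+1 by move=> Pd; apply: NNPP => nP; apply: h; exists d.
have : forall k, P k by elim=> // k /step.
by move/(_ B)/hB; rewrite ltnn.
Qed.

Lemma diffs_bound (P : 'rV[R]_m -> Prop) (u : 'rV[R]_m) (c : R) : u != 0 ->
  (forall l, P l -> pairing l u = c) -> forall d, has_indep_diffs P d -> (d < m)%N.
Proof.
move=> u0 Hu d [A [fA hA]].
have AuT : A *m u^T = 0.
  apply/row_matrixP => i; rewrite row_mul row0.
  have [x [y [Px [Py ->]]]] := hA i.
  apply/matrixP => a b; rewrite !ord1 [RHS]mxE -pairingE pairingBl !Hu //.
  by rewrite subrr.
have uK : (u <= kermx A^T)%MS.
  by rewrite sub_kermx -[u]trmxK -trmx_mul AuT trmx0.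
have := mxrankS uK; rewrite mxrank_ker mxrank_tr (eqP fA).
have : \rank u != 0%N by rewrite mxrank_eq0.
lia.
Qed.

Lemma diffs_normal (P : 'rV[R]_m -> Prop) d : affine_dim P d -> (d < m)%N ->
  exists w : 'rV[R]_m, w != 0 /\ forall x y, P x -> P y -> pairing (x - y) w = 0.
Proof.
move=> [[A [fA hA]] nh] dm.
have sub x y : P x -> P y -> (x - y <= A)%MS.
  move=> Px Py; apply: contraT => nsub; case: nh.
  suff : has_indep_diffs P (1 + d)%N by [].
  exists (col_mx (x - y) A); split.
    have hlt : (A < col_mx (x - y) A)%MS.
      rewrite ltmxE -addsmxE addsmxSr /=.
      by apply: contra nsub => h; apply: submx_trans h; rewrite -addsmxE addsmxSl.
    move: hlt; rewrite ltmxErank => /andP [_]; rewrite (eqP fA) => hlt.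
    by rewrite /row_free eqn_leq rank_leq_row hlt.
  move=> i; case: (split_ordP i) => j ->; last by rewrite rowKd; apply: hA.
  by rewrite rowKu; exists x, y; do 2 split=> //; apply/rowP => k; rewrite !mxE ord1.
pose K := kermx A^T.
have [i Ki] : exists i, row i K != 0.
  apply: NNPP => h.
  have K0 : K = 0.
    apply/row_matrixP => i; rewrite row0; apply/eqP; apply: contraT => hi.
    by case: h; exists i.
  have := mxrank_ker A^T; rewrite -/K K0 mxrank0 mxrank_tr (eqP fA).
  lia.
exists (row i K); split=> // x y Px Py.
have wA : row i K *m A^T = 0 by apply/eqP; rewrite -sub_kermx row_sub.
have [D ED] := submxP (sub x y Px Py).
rewrite pairingE ED -mulmxA.
have -> : A *m (row i K)^T = 0 by rewrite -[A]trmxK -trmx_mul wA trmx0.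
by rewrite mulmx0 mxE.
Qed.

End AffineDimension.

Section LambdaPsi.
Variables (R : realFieldType) (m n : nat) (V : 'I_n -> 'rV[R]_m)
  (Sigma : {set {set 'I_n}}) (psi : 'rV[R]_m -> R).

Lemma Lambda_vertex S u :
  maximal_cone Sigma S -> agrees_on_cone V psi S u -> Lambda V Sigma psi u.
Proof.
move=> hS hu; exists 1%N, (fun _ => 1), (fun _ => u); split=> //.
split; first by rewrite big_ord1.
by split; [move=> i; exists S | rewrite big_ord1 scale1r].
Qed.

Lemma Lambda_pairing_const x c :
  (forall S u, maximal_cone Sigma S -> agrees_on_cone V psi S u -> pairing u x = c) ->
  forall l, Lambda V Sigma psi l -> pairing l x = c.
Proof.
move=> hc l [k [wt [p [_ [wt1 [hp ->]]]]]]; rewrite pairing_suml.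
rewrite (eq_bigr (fun i => wt i * c)); first by rewrite -big_distrl /= wt1 mul1r.
by move=> i _; have [S hS hpS] := hp i; rewrite (hc S (p i) hS hpS).
Qed.

Lemma vertices_pairing_const w :
  (exists S u, maximal_cone Sigma S /\ agrees_on_cone V psi S u) ->
  (forall x y, Lambda V Sigma psi x -> Lambda V Sigma psi y -> pairing (x - y) w = 0) ->
  exists c0, forall S u, maximal_cone Sigma S -> agrees_on_cone V psi S u ->
    pairing u w = c0.
Proof.
move=> [S0 [u0 [hS0 hu0]]] hw; exists (pairing u0 w) => S u hS hu.
apply/eqP; rewrite -subr_eq0 -pairingBl; apply/eqP.
by apply: hw; [apply: Lambda_vertex hS hu | apply: Lambda_vertex hS0 hu0].
Qed.

End LambdaPsi.

Theorem proposition3p8 (R : realFieldType) (m n : nat)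
  (v : 'I_n -> 'rV[int]_m) (Sigma : {set {set 'I_n}})
  (hSigma : complete_simplicial_fan (fun i => toNR R (v i)) Sigma)
  (psi : 'rV[R]_m -> R)
  (hpsi : Sigma_PL (fun i => toNR R (v i)) Sigma psi) :
  (exists2 d : nat, affine_dim (Lambda (fun i => toNR R (v i)) Sigma psi) d
                    & (d < m)%N)
  <->
  (exists (k : 'I_n) (c : R), forall l : 'rV[R]_m,
      Lambda (fun i => toNR R (v i)) Sigma psi l ->
      pairing l (toNR R (v k)) = c).
Proof.
set V := fun i => toNR R (v i).
have hPL := hpsi.2.
split=> [[d hd dm] | [k [c hc]]].
  have [w [w0 hw]] := diffs_normal hd dm.
  have vertex : exists S u, maximal_cone Sigma S /\ agrees_on_cone V psi S u.
    have [S hS _] := in_maximal hSigma 0.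
    by have [u hu] := hPL S (maximal_in hS); exists S, u.
  have [c0 Hw] := vertices_pairing_const vertex hw.
  have [k hk] := ray_with_fixed_values hSigma hPL w0 Hw.
  by exists k, (psi (V k)); apply: Lambda_pairing_const.
have bound := diffs_bound (ray_neq0 k hSigma) hc.
have [d hd nhd] := last_nat (indep_diffs0 _) bound.
by exists d; [split | apply: bound].
Qed.
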